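(* Let $\mathbf X=(X_1,\dots,X_n)$ have mutually independent components, each taking values in a finite set $V_i\subset\mathbb{R}$, let $f:\mathbb{R}^n\to\mathbb{R}$ be arbitrary, let $c_1,\dots,c_n\ge 0$ and $C\ge0$, and set $\overline C=\big(\sum_{i=1}^n c_i\big)-C$. Define $\overline{\mathrm{EVar}}(S)=\mathrm{EVar}([n]\setminus S)$ for $S\subseteq[n]$. Then: (i) $\overline{\mathrm{EVar}}$ is monotone non-decreasing ($S_1\subseteq S_2\Rightarrow \overline{\mathrm{EVar}}(S_1)\le\overline{\mathrm{EVar}}(S_2)$) and submodular (for $S_1\subset S_2\subseteq[n]$ and $x\in[n]\setminus S_2$, $\overline{\mathrm{EVar}}(S_1\cup\{x\})-\overline{\mathrm{EVar}}(S_1)\ge \overline{\mathrm{EVar}}(S_2\cup\{x\})-\overline{\mathrm{EVar}}(S_2)$); (ii) for every $\alpha\ge1$, a set $S$ satisfies $\sum_{i\in S}c_i\ge\overline C$ and $\overline{\mathrm{EVar}}(S)\le\alpha\cdot\min\{\overline{\mathrm{EVar}}(S'):\sum_{i\in S'}c_i\ge \overline C\}$ if and only if $T=[n]\setminus S$ satisfies $\sum_{i\in T}c_i\le C$ and $\mathrm{EVar}(T)\le\alpha\cdot\min\{\mathrm{EVar}(T'):\sum_{i\in T'}c_i\le C\}$.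
   Context: For $T=\{i_1<\dots<i_k\}\subseteq[n]$ write $\mathbf X_T=(X_{i_1},\dots,X_{i_k})$ and $\mathbf V_T=V_{i_1}\times\dots\times V_{i_k}$. Define $$\mathrm{EVar}(T)=\sum_{\mathbf v\in\mathbf V_T,\ \Pr[\mathbf X_T=\mathbf v]>0}\Pr[\mathbf X_T=\mathbf v]\cdot \mathrm{Var}\big(f(\mathbf X)\mid \mathbf X_T=\mathbf v\big),$$ with $\mathrm{EVar}(\emptyset)=\mathrm{Var}(f(\mathbf X))$. The MinVar problem is: minimize $\mathrm{EVar}(T)$ over $T\subseteq[n]$ subject to $\sum_{i\in T}c_i\le C$ (here $c_i$ is the cost of cleaning object $i$ and $C$ the budget). *)

From HB Require Import structures.
From mathcomp Require Import all_boot all_order all_algebra.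
Set Implicit Arguments. Unset Strict Implicit. Unset Printing Implicit Defensive.
Import Order.TTheory GRing.Theory Num.Theory.
Local Open Scope ring_scope.

Section EVar.
Variables (R : realFieldType) (n : nat) (U : finType).
(* U : a finite set of "labels" whose embedding emb into R contains every V_i;
   p i u = Pr[X_i = emb u]; the components are independent, so the law of
   the outcome x : 'I_n -> U is the product measure. *)
Variables (emb : U -> R) (p : 'I_n -> U -> R) (f : 'rV[R]_n -> R).

Definition outcome := {ffun 'I_n -> U}.

Definition Xval (x : outcome) : 'rV[R]_n := \row_i emb (x i).

Definition Pr (x : outcome) : R := \prod_i p i (x i).

Definition PrE (A : pred outcome) : R := \sum_(x | A x) Pr x.

Definition condE (A : pred outcome) (g : outcome -> R) : R :=
  (\sum_(x | A x) Pr x * g x) / PrE A.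

Definition condVar (A : pred outcome) : R :=
  condE A (fun x => (f (Xval x) - condE A (fun y => f (Xval y))) ^+ 2).

Definition eventT (T : {set 'I_n}) (v : {ffun {i : 'I_n | i \in T} -> U})
  : pred outcome :=
  fun x => [forall j : {i : 'I_n | i \in T}, emb (x (val j)) == emb (v j)].

Definition EVar (T : {set 'I_n}) : R :=
  \sum_(v : {ffun {i : 'I_n | i \in T} -> U} | 0 < PrE (eventT v))
     PrE (eventT v) * condVar (eventT v).

Definition EVarBar (S : {set 'I_n}) : R := EVar (~: S).

Definition Var : R := condVar predT.

End EVar.

(* min over a finite family, seeded with a value attained by a feasible element *)
Definition minOver (R : realFieldType) (T : finType) (P : pred T) (F : T -> R)
  (seed : R) : R := \big[Num.min/seed]_(t | P t) F t.

From HB Require Import structures.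
From mathcomp Require Import all_boot all_order all_algebra.
From mathcomp Require Import ring lra.
Set Implicit Arguments. Unset Strict Implicit. Unset Printing Implicit Defensive.
Import Order.TTheory GRing.Theory Num.Theory.
Local Open Scope ring_scope.

(* Write F = f(X) and E_T for conditional expectation given X_T. By independence
   E_T resamples the coordinates outside T, so E_A E_B = E_{A ∩ B}, and E_T is
   self-adjoint; hence EVar(T) = |F - E_T F|^2 = |F|^2 - |E_T F|^2 (Pythagoras).
   For B' ⊆ B the same argument gives |E_B F - E_B' F|^2 = |E_B F|^2 - |E_B' F|^2,
   so |E_T F|^2 grows with T (monotonicity), and applying the contraction E_A,
   A ⊆ B, to E_B F - E_{B \ x} F yields the diminishing returns of EVarBar.
   Part (ii) is the reindexing S ↦ [n] \ S, which exchanges the two budget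
   constraints. *)

Lemma sum_indicator (R : pzSemiRingType) (U : finType) (a : U) (g : U -> R) :
  \sum_u (u == a)%:R * g u = g a.
Proof.
rewrite (bigD1 a) //= eqxx mul1r big1 ?addr0 // => u /negbTE ->.
exact: mul0r.
Qed.

Lemma sum_ffun_prod (R : pzSemiRingType) (I J : finType) (G : I -> J -> R) :
  \sum_(y : {ffun I -> J}) \prod_i G i (y i) = \prod_i \sum_j G i j.
Proof. by rewrite bigA_distr_bigA. Qed.

Lemma cost_complement (R : realDomainType) (I : finType) (c : I -> R) (C : R)
    (S : {set I}) :
  ((\sum_i c i) - C <= \sum_(i in S) c i) = (\sum_(i in ~: S) c i <= C).
Proof.
have -> : \sum_i c i = \sum_(i in S) c i + \sum_(i in ~: S) c i.
  by rewrite (bigID [in S]) /=; congr (_ + _); apply: eq_bigl => i; rewrite inE.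
by apply/idP/idP => ?; lra.
Qed.

Lemma minOver_setC (R : realFieldType) (I : finType) (P : pred {set I})
    (F : {set I} -> R) (seed : R) :
  minOver P (fun S => F (~: S)) seed = minOver (fun T => P (~: T)) F seed.
Proof.
rewrite /minOver (reindex_inj (@setC_inj _)) /=.
by apply: eq_bigr => T _; rewrite setCK.
Qed.

Lemma setC_setU1 (I : finType) (x : I) (S : {set I}) : ~: (x |: S) = ~: S :\ x.
Proof. by rewrite setCU setIC setDE. Qed.

Section ConditionalExpectation.
Variables (R : realFieldType) (n : nat) (U : finType) (p : 'I_n -> U -> R).
Hypothesis p_ge0 : forall i u, 0 <= p i u.
Hypothesis p_sum1 : forall i, \sum_u p i u = 1.

Local Notation outcome := (outcome n U).
Local Notation Pr := (Pr p).
Implicit Types (A B T : {set 'I_n}) (g h : outcome -> R) (x y z : outcome).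

(* The transition kernel that keeps the coordinates in [A] and redraws the
   others independently; [condexp A] is conditional expectation given X_A. *)
Definition resample (A : {set 'I_n}) (x y : outcome) : R :=
  \prod_i (if i \in A then (y i == x i)%:R else p i (y i)).

Definition condexp (A : {set 'I_n}) (g : outcome -> R) (x : outcome) : R :=
  \sum_y resample A x y * g y.

Definition dot (g h : outcome -> R) : R := \sum_x Pr x * g x * h x.

Definition sqnorm (g : outcome -> R) : R := \sum_x Pr x * g x ^+ 2.

Lemma Pr_ge0 x : 0 <= Pr x.
Proof. exact: prodr_ge0. Qed.

Lemma sqnorm_ge0 g : 0 <= sqnorm g.
Proof. by apply: sumr_ge0 => x _; rewrite mulr_ge0 ?Pr_ge0 ?sqr_ge0. Qed.

Lemma eq_sqnorm g h : g =1 h -> sqnorm g = sqnorm h.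
Proof. by move=> eq_gh; apply: eq_bigr => x _; rewrite eq_gh. Qed.

Lemma resample_sum1 A x : \sum_y resample A x y = 1.
Proof.
rewrite (sum_ffun_prod (fun i u => if i \in A then (u == x i)%:R else p i u)).
apply: big1 => i _.
case: (i \in A); last exact: p_sum1.
by rewrite -[RHS](sum_indicator (x i) (fun=> 1)); apply: eq_bigr => u _; rewrite mulr1.
Qed.

Lemma resample_comp A B x z :
  \sum_y resample A x y * resample B y z = resample (A :&: B) x z.
Proof.
under eq_bigr do rewrite -big_split /=.
rewrite (sum_ffun_prod (fun i u => (if i \in A then (u == x i)%:R else p i u) *
                           (if i \in B then (z i == u)%:R else p i (z i)))) /=.
apply: eq_bigr => i _; rewrite inE.
case: (i \in A); case: (i \in B) => /=; rewrite ?sum_indicator //.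
- by under eq_bigr do rewrite mulrC eq_sym; rewrite sum_indicator.
- by rewrite -mulr_suml p_sum1 mul1r.
Qed.

Lemma Pr_resampleC A x y : Pr x * resample A x y = Pr y * resample A y x.
Proof.
rewrite -!big_split /=; apply: eq_bigr => i _.
case: (i \in A); last by rewrite mulrC.
by case: (eqVneq (y i) (x i)) => [->|_]; rewrite ?mulr0.
Qed.

Lemma condexp_comp A B g : condexp A (condexp B g) =1 condexp (A :&: B) g.
Proof.
move=> x; rewrite /condexp; under eq_bigr do rewrite big_distrr.
rewrite exchange_big /=; apply: eq_bigr => z _.
by rewrite -resample_comp big_distrl; apply: eq_bigr => y _; rewrite mulrA.
Qed.

Lemma condexpB A g h :
  condexp A (fun y => g y - h y) =1 (fun x => condexp A g x - condexp A h x).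
Proof. by move=> x; rewrite /condexp -sumrB; apply: eq_bigr => y _; rewrite mulrBr. Qed.

Lemma dot_condexp A g h : dot g (condexp A h) = dot (condexp A g) h.
Proof.
transitivity (\sum_x \sum_y Pr x * resample A x y * g x * h y).
  apply: eq_bigr => x _; rewrite big_distrr /=; apply: eq_bigr => y _; ring.
rewrite exchange_big /=; apply: eq_bigr => y _.
rewrite big_distrr big_distrl /=; apply: eq_bigr => x _.
rewrite Pr_resampleC; ring.
Qed.

Lemma sqnorm_sub_condexp A g :
  sqnorm (fun x => g x - condexp A g x) = sqnorm g - sqnorm (condexp A g).
Proof.
have dot_gE : dot g (condexp A g) = sqnorm (condexp A g).
  transitivity (dot g (condexp A (condexp A g))).
    by apply: eq_bigr => x _; rewrite condexp_comp setIid.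
  by rewrite dot_condexp; apply: eq_bigr => x _; rewrite expr2 mulrA.
have -> : sqnorm (fun x => g x - condexp A g x) =
          sqnorm g - 2 * dot g (condexp A g) + sqnorm (condexp A g).
  rewrite /sqnorm /dot mulr_sumr -!sumrB -big_split /=.
  by apply: eq_bigr => x _; ring.
by rewrite dot_gE; ring.
Qed.

Lemma sqnorm_condexp_le A g : sqnorm (condexp A g) <= sqnorm g.
Proof. by rewrite -subr_ge0 -sqnorm_sub_condexp sqnorm_ge0. Qed.

Lemma sqnorm_condexp_sub A B g : A \subset B ->
  sqnorm (fun x => condexp B g x - condexp A g x) =
  sqnorm (condexp B g) - sqnorm (condexp A g).
Proof.
move=> sAB; have proj : condexp A (condexp B g) =1 condexp A g.
  by move=> x; rewrite condexp_comp (setIidPl sAB).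
rewrite -(eq_sqnorm proj) -sqnorm_sub_condexp.
by apply: eq_sqnorm => x; rewrite proj.
Qed.

Lemma sqnorm_condexp_monotone A B g : A \subset B ->
  sqnorm (condexp A g) <= sqnorm (condexp B g).
Proof. by move=> sAB; rewrite -subr_ge0 -sqnorm_condexp_sub // sqnorm_ge0. Qed.

Lemma sqnorm_condexp_increment A B g (x : 'I_n) : A \subset B ->
  sqnorm (condexp A g) - sqnorm (condexp (A :\ x) g) <=
  sqnorm (condexp B g) - sqnorm (condexp (B :\ x) g).
Proof.
move=> sAB; set h := fun y => condexp B g y - condexp (B :\ x) g y.
have Eh : condexp A h =1 fun y => condexp A g y - condexp (A :\ x) g y.
  by move=> y; rewrite condexpB !condexp_comp setIDA (setIidPl sAB).
rewrite -sqnorm_condexp_sub ?subD1set // -(eq_sqnorm Eh).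
by rewrite -sqnorm_condexp_sub ?subD1set //; exact: sqnorm_condexp_le.
Qed.

Variables (emb : U -> R) (f : 'rV[R]_n -> R).
Hypothesis emb_inj : injective emb.

Local Notation fX := (fun x => f (Xval emb x)).
Local Notation values T := {ffun {i : 'I_n | i \in T} -> U}.

Definition restr (T : {set 'I_n}) (x : outcome) : values T := [ffun j => x (val j)].

Lemma eventT_restr T (v : values T) x : eventT emb v x = (v == restr T x).
Proof.
apply/forallP/eqP => [emb_eq|->]; last by move=> j; rewrite ffunE.
by apply/ffunP => j; rewrite ffunE; apply/esym/emb_inj/eqP/emb_eq.
Qed.

Lemma sum_eventT T (G : values T -> outcome -> R) :
  \sum_(v : values T) \sum_(x | eventT emb v x) G v x = \sum_x G (restr T x) x.
Proof.
under eq_bigr do rewrite big_mkcond.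
rewrite exchange_big /=; apply: eq_bigr => x _.
under eq_bigr do rewrite eventT_restr.
by rewrite -big_mkcond big_pred1_eq.
Qed.

Lemma restr_eq_indicator T x y :
  (restr T x == restr T y)%:R = \prod_(i in T) (y i == x i)%:R :> R.
Proof.
case: (boolP [forall i in T, y i == x i]) => [/forall_inP eq_xy|/forall_inPn [i Ti ne]].
  have -> : restr T x = restr T y.
    by apply/ffunP => j; rewrite !ffunE (eqP (eq_xy _ (valP j))).
  by rewrite eqxx big1 // => i Ti; rewrite (eqP (eq_xy _ Ti)) eqxx.
rewrite (bigD1 i Ti) /= (negbTE ne) mul0r.
case: eqP => // /ffunP /(_ (exist _ i Ti)); rewrite !ffunE /= => exy.
by rewrite exy eqxx in ne.
Qed.

Lemma Pr_restr_eq T x y :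
  (restr T x == restr T y)%:R * Pr y = (\prod_(i in T) p i (x i)) * resample T x y.
Proof.
rewrite restr_eq_indicator /Pr /resample.
rewrite [\prod_i p i (y i)](bigID [in T]) [\prod_i (if _ then _ else _)](bigID [in T]) /=.
rewrite !mulrA -!big_split /=; congr (_ * _); last by apply: eq_bigr => i /negbTE ->.
apply: eq_bigr => i ->.
by case: (eqVneq (y i) (x i)) => [->|_]; rewrite ?mulr1 ?mul0r ?mulr0 // mul1r.
Qed.

Lemma condE_restr T g x : Pr x != 0 ->
  condE p (eventT emb (restr T x)) g = condexp T g x.
Proof.
move=> Px; set m := \prod_(i in T) p i (x i).
have ev y : (eventT emb (restr T x) y)%:R * Pr y = m * resample T x y.
  by rewrite eventT_restr Pr_restr_eq.
have m_neq0 : m != 0.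
  apply: contra_neq Px => m0.
  by move: (ev x); rewrite eventT_restr eqxx mul1r m0 mul0r.
have mass : PrE p (eventT emb (restr T x)) = m.
  rewrite /PrE big_mkcond -[RHS]mulr1 -(resample_sum1 T x) big_distrr /=.
  by apply: eq_bigr => y _; rewrite -ev; case: eventT; rewrite ?mul1r ?mul0r.
have mass_g : \sum_(y | eventT emb (restr T x) y) Pr y * g y = m * condexp T g x.
  rewrite big_mkcond /condexp big_distrr /=; apply: eq_bigr => y _.
  by rewrite mulrA -ev; case: eventT; rewrite ?mul1r ?mul0r.
by rewrite /condE mass mass_g mulrC mulKf.
Qed.

Lemma EVar_sum_sq T :
  EVar emb p f T = \sum_(v : values T) \sum_(x | eventT emb v x)
                     Pr x * (fX x - condE p (eventT emb v) fX) ^+ 2.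
Proof.
rewrite /EVar big_mkcond /=; apply: eq_bigr => v _.
have mass_ge0 : 0 <= PrE p (eventT emb v) by apply: sumr_ge0 => x _; exact: Pr_ge0.
case: ifP => [mass_gt0|mass_ngt0]; first by rewrite mulrC divfK ?gt_eqF.
have mass0 : PrE p (eventT emb v) = 0 by apply/eqP; rewrite eq_le mass_ge0 leNgt mass_ngt0.
symmetry; apply: big1 => x ev_x.
by rewrite (psumr_eq0P (fun y _ => Pr_ge0 y) mass0 ev_x) mul0r.
Qed.

Lemma EVar_sqnorm T : EVar emb p f T = sqnorm fX - sqnorm (condexp T fX).
Proof.
rewrite -sqnorm_sub_condexp EVar_sum_sq.
rewrite (sum_eventT (fun v x => Pr x * (fX x - condE p (eventT emb v) fX) ^+ 2)).
apply: eq_bigr => x _.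
by case: (eqVneq (Pr x) 0) => [->|Px]; rewrite ?mul0r // condE_restr.
Qed.

Lemma EVarBar_monotone (S1 S2 : {set 'I_n}) : S1 \subset S2 ->
  EVarBar emb p f S1 <= EVarBar emb p f S2.
Proof.
move=> sS12; rewrite /EVarBar !EVar_sqnorm lerD2l lerN2.
by apply: sqnorm_condexp_monotone; rewrite setCS.
Qed.

Lemma EVarBar_submodular (S1 S2 : {set 'I_n}) (x : 'I_n) : S1 \subset S2 ->
  EVarBar emb p f (x |: S2) - EVarBar emb p f S2 <=
  EVarBar emb p f (x |: S1) - EVarBar emb p f S1.
Proof.
move=> sS12; rewrite /EVarBar !setC_setU1 !EVar_sqnorm.
have := @sqnorm_condexp_increment (~: S2) (~: S1) fX x; rewrite setCS => /(_ sS12).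
lra.
Qed.

End ConditionalExpectation.

Theorem mainTheorem4 (R : realFieldType) (n : nat) (U : finType)
  (emb : U -> R) (p : 'I_n -> U -> R) (f : 'rV[R]_n -> R)
  (c : 'I_n -> R) (C : R) :
  injective emb ->
  (forall i u, 0 <= p i u) ->
  (forall i, \sum_u p i u = 1) ->
  (forall i, 0 <= c i) ->
  0 <= C ->
  let Cbar := (\sum_i c i) - C in
  let EV := EVar emb p f in
  let EVb := EVarBar emb p f in
  (* (i) monotone and submodular *)
  ((forall S1 S2 : {set 'I_n}, S1 \subset S2 -> EVb S1 <= EVb S2) /\
   (forall (S1 S2 : {set 'I_n}) (x : 'I_n), S1 \subset S2 -> x \notin S2 ->
      EVb (x |: S2) - EVb S2 <= EVb (x |: S1) - EVb S1)) /\
  (* (ii) approximation equivalence *)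
  (forall alpha : R, 1 <= alpha -> forall S : {set 'I_n},
     ((Cbar <= \sum_(i in S) c i) /\
      EVb S <= alpha * minOver (fun S' : {set 'I_n} => Cbar <= \sum_(i in S') c i)
                               EVb (EVb setT))
     <->
     ((\sum_(i in ~: S) c i <= C) /\
      EV (~: S) <= alpha * minOver (fun T' : {set 'I_n} => \sum_(i in T') c i <= C)
                               EV (EV set0))).
Proof.
move=> emb_inj p_ge0 p_sum1 _ _ Cbar EV EVb.
split; [split|].
- by move=> S1 S2; apply: EVarBar_monotone.
- by move=> S1 S2 x sS12 _; apply: EVarBar_submodular.
move=> alpha _ S.
have -> : minOver (fun S' : {set 'I_n} => Cbar <= \sum_(i in S') c i) EVb (EVb setT) =
          minOver (fun T' : {set 'I_n} => \sum_(i in T') c i <= C) EV (EV set0).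
  rewrite /EVb /EVarBar setCT minOver_setC.
  by apply: eq_bigl => T; rewrite cost_complement setCK.
by rewrite /Cbar cost_complement.
Qed.
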